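(* Let $\mathcal{H}$ be a complex linear space with a Hermitian sesquilinear form $[\cdot,\cdot]$, and suppose $\mathcal{H}=\operatorname{span}\{f_n\}_{n=1}^\infty$ (finite linear combinations), where $[f_n,f_m]=0$ for $n\neq m$, $[f_n,f_n]\neq 0$ for all $n$, and there exist indices $n,m$ with $[f_n,f_n]>0$ and $[f_m,f_m]<0$. Let $\mathcal{F}_{++}=\{f\in\mathcal{H}:[f,f]>0\}$. Let $W$ be the linear operator on $\mathcal{H}$ defined by $Wf_n=\mu_nf_n$, where $\mu_n\in\mathbb{C}$, $\mu_n\neq0$. Then the following are equivalent: (i) $W$ maps $\mathcal{F}_{++}$ onto $\mathcal{F}_{++}$ in a one-to-one manner; (ii) there exists $c>0$ such that $|\mu_n|=c$ for all $n\in\mathbb{N}$. *)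

From HB Require Import structures.
From mathcomp Require Import all_boot all_order all_algebra.
From mathcomp Require Import complex.
From mathcomp Require Import reals.
Set Implicit Arguments. Unset Strict Implicit. Unset Printing Implicit Defensive.
Import Order.TTheory GRing.Theory Num.Theory.
Local Open Scope ring_scope.

Definition hermitian_sesq (R : realType) (H : lmodType R[i])
    (B : H -> H -> R[i]) : Prop :=
  [/\ forall (a : R[i]) (x y z : H), B (a *: x + y) z = a * B x z + B y z,
      forall (a : R[i]) (x y z : H), B z (a *: x + y) = a^* * B z x + B z y
    & forall x y : H, B x y = (B y x)^* ].

Definition spans (R : realType) (H : lmodType R[i]) (f : nat -> H) : Prop :=
  forall h : H, exists (n : nat) (a : 'I_n -> R[i]),
    h = \sum_(k < n) a k *: f k.

Definition Fpp (R : realType) (H : lmodType R[i]) (B : H -> H -> R[i]) (x : H)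
  : Prop := 0 < B x x.

Definition bij_on_Fpp (R : realType) (H : lmodType R[i])
    (B : H -> H -> R[i]) (W : H -> H) : Prop :=
  [/\ forall x, Fpp B x -> Fpp B (W x),
      forall y, Fpp B y -> exists x, Fpp B x /\ W x = y
    & forall x y, Fpp B x -> Fpp B y -> W x = W y -> x = y].

From HB Require Import structures.
From mathcomp Require Import all_boot all_order all_algebra.
From mathcomp Require Import complex.
From mathcomp Require Import reals ring lra.
Set Implicit Arguments. Unset Strict Implicit. Unset Printing Implicit Defensive.
Import Order.TTheory GRing.Theory Num.Theory.
Local Open Scope ring_scope.

(* On an expansion x = \sum_k d_k f_k, W multiplies d_k by mu_k, so by
   orthogonality [Wx, Wx] = \sum_k |d_k|^2 |mu_k|^2 [f_k, f_k]; W is bijective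
   because no mu_k and no [f_k, f_k] vanishes.  Hence W maps F_{++} onto itself
   one-to-one iff [Wx, Wx] and [x, x] always have the same sign.  If |mu_k| = c
   then [Wx, Wx] = c^2 [x, x].  Conversely, if |mu_p| <> |mu_q| for
   [f_p, f_p] > 0 > [f_q, f_q], real weights u, v can be chosen so that
   x = u f_p + v f_q has [x, x] and [Wx, Wx] of opposite signs. *)

Lemma ltr0c (R : rcfType) (k : R) : (0 < k%:C%C) = (0 < k).
Proof. by rewrite ltcE /= eqxx. Qed.

Lemma ltrc0 (R : rcfType) (k : R) : (k%:C%C < 0) = (k < 0).
Proof. by rewrite ltcE /= eqxx. Qed.

Lemma normC_real_sqr (R : realType) (u : R) : `|u%:C%C| ^+ 2 = (u ^+ 2)%:C%C.
Proof.
by rewrite normCK conj_Creal ?rmorphXn //; apply/complex_realP; exists u.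
Qed.

Lemma sign_change_weights (R : realType) (a b r s : R) :
  0 < a -> b < 0 -> 0 < r -> 0 <= s -> r != s ->
  exists u v : R,
    (0 < u ^+ 2 * r * a + v ^+ 2 * s * b) != (0 < u ^+ 2 * a + v ^+ 2 * b).
Proof.
move=> a_gt0 b_lt0 r_gt0 s_ge0 neq_rs.
have U_ge0 : 0 <= - ((r + s) * b) by nra.
have V_ge0 : 0 <= 2 * r * a by nra.
exists (Num.sqrt (- ((r + s) * b))), (Num.sqrt (2 * r * a)).
rewrite !sqr_sqrtr //.
set t := a * b * (r - s).
have -> : - ((r + s) * b) * a + 2 * r * a * b = t by rewrite /t; ring.
have -> : - ((r + s) * b) * r * a + 2 * r * a * s * b = - (r * t).
  by rewrite /t; ring.
have t_neq0 : t != 0.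
  by rewrite !mulf_eq0 subr_eq0 (negbTE neq_rs) (gt_eqF a_gt0) (lt_eqF b_lt0).
rewrite oppr_gt0 pmulr_rlt0 //.
by case: (ltgtP t 0) t_neq0.
Qed.

Lemma bij_on_Fpp_iff_preserves_sign (R : realType) (H : lmodType R[i])
    (B : H -> H -> R[i]) (W : H -> H) :
  injective W -> (forall y, exists x, W x = y) ->
  bij_on_Fpp B W <-> forall x, (0 < B (W x) (W x)) = (0 < B x x).
Proof.
move=> W_inj W_surj; split=> [[W_Fpp W_onto _] x | W_sign].
  apply/idP/idP=> [/W_onto[x' [Fx' /W_inj <-]] // | ]; exact: W_Fpp.
split=> [x | y Fy | x y _ _ /W_inj //]; first by rewrite /Fpp W_sign.
by have [x Wx] := W_surj y; exists x; rewrite /Fpp -W_sign Wx.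
Qed.

Section OrthogonalBasis.

Variables (R : realType) (H : lmodType R[i]) (B : H -> H -> R[i]).
Hypothesis B_herm : hermitian_sesq B.

Lemma form0l z : B 0 z = 0.
Proof.
case: B_herm => BZD _ _; have := BZD 1 0 0 z.
by rewrite scale1r addr0 mul1r => B0; apply: (addrI (B 0 z)); rewrite addr0 -B0.
Qed.

Lemma formDl x y z : B (x + y) z = B x z + B y z.
Proof. by case: B_herm => BZD _ _; rewrite -[x]scale1r BZD mul1r scale1r. Qed.

Lemma formZl a x z : B (a *: x) z = a * B x z.
Proof. by case: B_herm => BZD _ _; rewrite -[a *: x]addr0 BZD form0l addr0. Qed.

Lemma form_suml (I : Type) (r : seq I) (P : pred I) (F : I -> H) z :
  B (\sum_(i <- r | P i) F i) z = \sum_(i <- r | P i) B (F i) z.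
Proof. exact: (big_morph (B^~ z) (fun x y => formDl x y z) (form0l z)). Qed.

Lemma form_conj x y : (B x y)^* = B y x.
Proof. by case: B_herm => _ _ ->; rewrite conjCK. Qed.

Lemma form_self_real x : B x x \is Num.real.
Proof. by apply/CrealP; rewrite form_conj. Qed.

Variable f : nat -> H.
Hypothesis f_orth : forall n m, n <> m -> B (f n) (f m) = 0.

Lemma form_sum_basis (I : finType) (g : I -> nat) (d : I -> R[i]) i :
  injective g ->
  B (\sum_j d j *: f (g j)) (f (g i)) = d i * B (f (g i)) (f (g i)).
Proof.
move=> g_inj; rewrite form_suml (bigD1 i) //= big1 ?addr0 => [|j ji].
  by rewrite formZl.
by rewrite formZl f_orth ?mulr0 // => /g_inj/eqP; rewrite (negbTE ji).
Qed.

Lemma form_sum_self (I : finType) (g : I -> nat) (d : I -> R[i]) :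
  injective g ->
  B (\sum_i d i *: f (g i)) (\sum_i d i *: f (g i))
  = \sum_i `|d i| ^+ 2 * B (f (g i)) (f (g i)).
Proof.
move=> g_inj; rewrite form_suml; apply: eq_bigr => i _.
rewrite formZl -form_conj form_sum_basis // rmorphM /=.
by rewrite (conj_Creal (form_self_real _)) mulrA -normCK.
Qed.

Variables (mu : nat -> R[i]) (W : {linear H -> H}).
Hypothesis W_f : forall n, W (f n) = mu n *: f n.

Lemma diag_sum (I : finType) (g : I -> nat) (d : I -> R[i]) :
  W (\sum_i d i *: f (g i)) = \sum_i (d i * mu (g i)) *: f (g i).
Proof.
by rewrite linear_sum; apply: eq_bigr => i _; rewrite linearZ /= W_f scalerA.
Qed.

Hypothesis mu_neq0 : forall n, mu n != 0.
Hypothesis f_span : spans f.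
Hypothesis f_nondeg : forall n, B (f n) (f n) != 0.

Lemma diag_injective : injective W.
Proof.
suff W_ker0 x : W x = 0 -> x = 0 by apply: raddf_inj.
have [n [d ->]] := f_span x; rewrite diag_sum => Wx0.
have d_eq0 k : d k = 0.
  have /eqP := form_sum_basis (fun k => d k * mu k) k (@ord_inj n).
  rewrite Wx0 form0l eq_sym !mulf_eq0 (negbTE (mu_neq0 k)).
  by rewrite (negbTE (f_nondeg k)) !orbF => /eqP.
by rewrite big1 // => k _; rewrite d_eq0 scale0r.
Qed.

Lemma diag_surjective y : exists x, W x = y.
Proof.
have [n [d ->]] := f_span y; exists (\sum_(k < n) (d k / mu k) *: f k).
by rewrite diag_sum; apply: eq_bigr => k _; rewrite divfK.
Qed.

Lemma diag_form_scale c :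
  (forall n, `|mu n| = c%:C%C) ->
  forall x, B (W x) (W x) = (c ^+ 2)%:C%C * B x x.
Proof.
move=> mu_norm x; have [n [d ->]] := f_span x.
rewrite diag_sum !(form_sum_self _ (@ord_inj n)).
rewrite mulr_sumr; apply: eq_bigr => k _.
by rewrite normrM exprMn mu_norm rmorphXn -mulrA mulrCA.
Qed.

Lemma diag_norm_eq_of_sign_preserving :
  (forall x, (0 < B (W x) (W x)) = (0 < B x x)) ->
  forall p q, 0 < B (f p) (f p) -> B (f q) (f q) < 0 -> `|mu p| = `|mu q|.
Proof.
move=> W_sign p q Bp_gt0 Bq_lt0.
have /complex_realP[a Ba] := form_self_real (f p).
have /complex_realP[b Bb] := form_self_real (f q).
have /complex_realP[r mu_p] := rpredX 2 (normr_real (mu p)).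
have /complex_realP[s mu_q] := rpredX 2 (normr_real (mu q)).
apply/eqP; apply: contraT => neq_mu.
have [u [v sign_neq]] : exists u v : R,
    (0 < u ^+ 2 * r * a + v ^+ 2 * s * b) != (0 < u ^+ 2 * a + v ^+ 2 * b).
  apply: sign_change_weights.
  - by rewrite -ltr0c -Ba.
  - by rewrite -ltrc0 -Bb.
  - by rewrite -ltr0c -mu_p exprn_gt0 // normr_gt0.
  - by rewrite -ler0c -mu_q exprn_ge0.
  - apply: contra neq_mu => /eqP rs.
    by rewrite -(eqrXn2 (n := 2)) // mu_p mu_q rs.
have neq_pq : p != q by apply: contraTneq Bq_lt0 => <-; rewrite lt_gtF.
pose g (k : bool) := if k then p else q.
have g_inj : injective g.
  by move=> [] [] //= /eqP; rewrite ?(negbTE neq_pq) // eq_sym (negbTE neq_pq).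
pose d (k : bool) := (if k then u else v)%:C%C.
have := W_sign (\sum_k d k *: f (g k)).
rewrite diag_sum !form_sum_self // !big_bool /=.
rewrite !normrM !exprMn !normC_real_sqr mu_p mu_q Ba Bb.
by rewrite -!rmorphM -!rmorphD !ltr0c => /eqP; rewrite (negbTE sign_neq).
Qed.

End OrthogonalBasis.

Theorem proposition2p5 (R : realType) (H : lmodType R[i])
    (B : H -> H -> R[i]) (f : nat -> H) (mu : nat -> R[i])
    (W : {linear H -> H}) :
  hermitian_sesq B ->
  spans f ->
  (forall n m : nat, n <> m -> B (f n) (f m) = 0) ->
  (forall n : nat, B (f n) (f n) != 0) ->
  (exists n : nat, 0 < B (f n) (f n)) ->
  (exists m : nat, B (f m) (f m) < 0) ->
  (forall n : nat, mu n != 0) ->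
  (forall n : nat, W (f n) = mu n *: f n) ->
  (bij_on_Fpp B W <-> exists c : R, 0 < c /\ forall n : nat, `|mu n| = (c%:C)%C).
Proof.
move=> B_herm f_span f_orth f_nondeg [p Bp_gt0] [q Bq_lt0] mu_neq0 W_f.
have W_inj := diag_injective B_herm f_orth W_f mu_neq0 f_span f_nondeg.
rewrite (bij_on_Fpp_iff_preserves_sign B W_inj (diag_surjective W_f mu_neq0 f_span)).
split=> [W_sign | [c [c_gt0 mu_norm]] x]; last first.
  rewrite (diag_form_scale B_herm f_orth W_f f_span mu_norm).
  by rewrite pmulr_rgt0 // ltr0c exprn_gt0.
have norm_eq :=
  diag_norm_eq_of_sign_preserving B_herm f_orth W_f mu_neq0 W_sign.
have /complex_realP[c mu_p] := normr_real (mu p).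
exists c; split=> [|n]; first by rewrite -ltr0c -mu_p normr_gt0.
rewrite -mu_p; have := f_nondeg n.
rewrite real_neqr_lt ?form_self_real ?real0 //.
case/orP=> Bn; first by rewrite (norm_eq p n).
by rewrite (norm_eq n q) // (norm_eq p q).
Qed.
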